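(* Let $\mathcal O$ be a non-degenerate conic of $\mathrm{PG}(2,q^2)$ and $\bar L\in\ell_\infty$ a point not on $\mathcal O$. Then in $\mathrm{PG}(4,q^2)$ the extended spread line $[L]^\star$ is disjoint from $[\mathcal O]^\star=\mathcal Q_\infty^\star\cap\mathcal Q_0^\star$.
   Context: Bruck–Bose setting with coordinates: $\tau$ primitive in $\mathbb F_{q^2}$ with minimal polynomial $x^2-t_1x-t_0$ over $\mathbb F_q$; $\ell_\infty: z=0$ in $\mathrm{PG}(2,q^2)$; $\Sigma_\infty: z=0$ in $\mathrm{PG}(4,q)$ with coordinates $(x_0,x_1,y_0,y_1,z)$. The affine point $(x_0+x_1\tau,y_0+y_1\tau,z)$ maps to $(x_0,x_1,y_0,y_1,z)$, and $\bar T=(\delta,1,0)\in\ell_\infty$, $\delta=d_0+d_1\tau$, to the spread line $[T]=\langle(d_0,d_1,1,0,0),(t_0d_1,d_0+t_1d_1,0,1,0)\rangle$ (and $(1,0,0)$ to $\langle(1,0,0,0,0),(0,1,0,0,0)\rangle$). If $\mathcal O$ has equation $f(x,y,z)=0$, substituting $x=x_0+x_1\tau$, $y=y_0+y_1\tau$ and reducing with $\tau^2=t_1\tau+t_0$ gives $f=f_\infty+\tau f_0$ with $f_\infty,f_0$ homogeneous quadratics over $\mathbb F_q$; $\mathcal Q_\infty,\mathcal Q_0$ are the quadrics $f_\infty=0$, $f_0=0$ of $\mathrm{PG}(4,q)$, and $\mathcal V^\star$ denotes the set of points of $\mathrm{PG}(4,q^2)$ satisfying the equations defining $\mathcal V$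 (for a line, its extension to a line of $\mathrm{PG}(4,q^2)$). *)

From HB Require Import structures.
From mathcomp Require Import all_boot all_order all_algebra all_field.
Set Implicit Arguments. Unset Strict Implicit. Unset Printing Implicit Defensive.
Import GRing.Theory.
Local Open Scope ring_scope.

(* A homogeneous quadratic form in n variables, given by its coefficients
   c i j (i <= j) of the monomials v_i v_j; entries with i > j are ignored. *)
Definition qform (R : pzRingType) (n : nat) (c : 'I_n -> 'I_n -> R)
  (v : 'rV[R]_n) : R :=
  \sum_(i < n) \sum_(j < n | (i <= j)%N) c i j * v 0 i * v 0 j.

(* Non-degenerate (non-singular) conic/quadric: no singular point, i.e. no
   nonzero v with Q(v) = 0 lying in the radical of the polar form. *)
Definition nonsingular_qform (R : pzRingType) (n : nat)
  (c : 'I_n -> 'I_n -> R) : Prop :=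
  forall v : 'rV[R]_n, v != 0 -> qform c v = 0 ->
    ~ (forall u : 'rV[R]_n, qform c (u + v) = qform c u + qform c v).

Definition in_Fq (R : pzRingType) (q : nat) (x : R) : Prop := x ^+ q = x.

Definition Fq_coeffs (R : pzRingType) (q n : nat) (c : 'I_n -> 'I_n -> R) : Prop :=
  forall i j : 'I_n, (i <= j)%N -> in_Fq q (c i j).

Definition vec3 (R : pzRingType) (a b c : R) : 'rV[R]_3 :=
  \row_(k < 3) nth 0 [:: a; b; c] k.
Definition vec5 (R : pzRingType) (a b c d e : R) : 'rV[R]_5 :=
  \row_(k < 5) nth 0 [:: a; b; c; d; e] k.

Definition bb_sub (R : pzRingType) (tau : R) (x : 'rV[R]_5) : 'rV[R]_3 :=
  vec3 (x 0 (inord 0) + x 0 (inord 1) * tau)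
       (x 0 (inord 2) + x 0 (inord 3) * tau)
       (x 0 (inord 4)).

(* Generators of the spread line [T] for T = (d0 + d1 tau, 1, 0). *)
Definition spread_gen1 (R : pzRingType) (d0 d1 : R) : 'rV[R]_5 :=
  vec5 d0 d1 1 0 0.
Definition spread_gen2 (R : pzRingType) (t0 t1 d0 d1 : R) : 'rV[R]_5 :=
  vec5 (t0 * d1) (d0 + t1 * d1) 0 1 0.
(* Generators of the spread line for (1,0,0). *)
Definition spread_inf1 (R : pzRingType) : 'rV[R]_5 := vec5 1 0 0 0 0.
Definition spread_inf2 (R : pzRingType) : 'rV[R]_5 := vec5 0 1 0 0 0.

(* Extension to PG(4,q^2) of the line spanned by g1, g2 (as a set of vectors). *)
Definition ext_line (R : pzRingType) (g1 g2 : 'rV[R]_5) (v : 'rV[R]_5) : Prop :=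
  exists a b : R, v = a *: g1 + b *: g2.

Definition disjoint_from_QQ (R : pzRingType) (g1 g2 : 'rV[R]_5)
  (finf f0 : 'I_5 -> 'I_5 -> R) : Prop :=
  forall v : 'rV[R]_5, v != 0 -> ext_line g1 g2 v ->
    ~ (qform finf v = 0 /\ qform f0 v = 0).

From HB Require Import structures.
From mathcomp Require Import all_boot all_order all_algebra all_field.
From mathcomp Require Import ring zify.
Set Implicit Arguments. Unset Strict Implicit.
Import GRing.Theory.
Local Open Scope ring_scope.

(* Let F x = x ^+ q be the Frobenius map of F_{q^2} over F_q.
   A spread line [L] is spanned by two F_q-rational vectors g1, g2, and the
   Bruck-Bose substitution maps a *: g1 + b *: g2 to (a + b tau) *: w, where
   w is a coordinate vector of the point L of l_oo.  If v = a g1 + b g2 lies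
   on Q_oo^* and Q_0^*, then f(bb v) = (a + b tau)^2 f(w) = 0, and f(w) != 0
   (L is not on the conic) forces a + b tau = 0.  Both quadrics have F_q
   coefficients, so v^F = F a g1 + F b g2 lies on them too, whence also
   F a + F b tau = 0.  Comparing with F(a + b tau) = F a + F b F tau = 0
   gives F b (tau - F tau) = 0, and tau is not in F_q, so b = a = 0.
   The file first proves this argument for an abstract additive F
   ([line_disjoint_from_QQ]), then checks that x ^+ q is additive with tau
   not fixed in a field of order q^2, and finally computes the Bruck-Bose
   image and rationality of the two kinds of spread lines. *)

Definition Fq_vec {R : pzRingType} (q : nat) {n : nat} (g : 'rV[R]_n) : Prop :=
  forall k, in_Fq q (g 0 k).

Lemma qform_scale (R : comPzRingType) n (c : 'I_n -> 'I_n -> R) s w :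
  qform c (s *: w) = s ^+ 2 * qform c w.
Proof.
rewrite /qform mulr_sumr; apply: eq_bigr => i _.
rewrite mulr_sumr; apply: eq_bigr => j _; rewrite !mxE; ring.
Qed.

Section Frobenius.

(* Throughout, x ^+ q is an additive map of the field E (as holds for a
   power q of the characteristic). *)
Variables (E : fieldType) (q : nat).
Hypothesis q_gt0 : (0 < q)%N.
Hypothesis frobD : forall x y : E, (x + y) ^+ q = x ^+ q + y ^+ q.

Lemma in_Fq0 : in_Fq q (0 : E).
Proof. by rewrite /in_Fq expr0n gtn_eqF. Qed.

Lemma in_Fq1 : in_Fq q (1 : E).
Proof. exact: expr1n. Qed.

Lemma in_FqD (x y : E) : in_Fq q x -> in_Fq q y -> in_Fq q (x + y).
Proof. by rewrite /in_Fq frobD => -> ->. Qed.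

Lemma in_FqM (x y : E) : in_Fq q x -> in_Fq q y -> in_Fq q (x * y).
Proof. by rewrite /in_Fq exprMn => -> ->. Qed.

Lemma qform_frob n (c : 'I_n -> 'I_n -> E) (v : 'rV[E]_n) :
  Fq_coeffs q c -> qform c (map_mx (fun x => x ^+ q) v) = qform c v ^+ q.
Proof.
move=> c_Fq; rewrite /qform (big_morph _ frobD in_Fq0); apply: eq_bigr => i _.
rewrite (big_morph _ frobD in_Fq0); apply: eq_bigr => j le_ij.
by rewrite !mxE !exprMn [c i j ^+ q]c_Fq.
Qed.

Lemma frob_lincomb n (g1 g2 : 'rV[E]_n) a b :
  Fq_vec q g1 -> Fq_vec q g2 ->
  map_mx (fun x => x ^+ q) (a *: g1 + b *: g2) = a ^+ q *: g1 + b ^+ q *: g2.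
Proof.
by move=> g1_Fq g2_Fq; apply/rowP => k; rewrite !mxE frobD !exprMn g1_Fq g2_Fq.
Qed.

Lemma tau_independent (tau a b : E) : tau ^+ q != tau ->
  a + b * tau = 0 -> a ^+ q + b ^+ q * tau = 0 -> a = 0 /\ b = 0.
Proof.
move=> tau_notFq ab0 abF0.
have abq0 : a ^+ q + b ^+ q * tau ^+ q = 0 by rewrite -exprMn -frobD ab0 in_Fq0.
have : b ^+ q * (tau - tau ^+ q) = 0.
  have -> : b ^+ q * (tau - tau ^+ q) =
    (a ^+ q + b ^+ q * tau) - (a ^+ q + b ^+ q * tau ^+ q) by ring.
  by rewrite abF0 abq0 subrr.
move/eqP; rewrite mulf_eq0 subr_eq0 (eq_sym tau) (negbTE tau_notFq) orbF.
rewrite expf_eq0 => /andP [_ /eqP b0].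
by split => //; move: ab0; rewrite b0 mul0r addr0.
Qed.

Lemma line_disjoint_from_QQ (tau : E) (f : 'I_3 -> 'I_3 -> E)
    (finf f0 : 'I_5 -> 'I_5 -> E) (g1 g2 : 'rV[E]_5) (w : 'rV[E]_3) :
  tau ^+ q != tau -> Fq_coeffs q finf -> Fq_coeffs q f0 ->
  (forall x, qform f (bb_sub tau x) = qform finf x + tau * qform f0 x) ->
  (forall a b, bb_sub tau (a *: g1 + b *: g2) = (a + b * tau) *: w) ->
  Fq_vec q g1 -> Fq_vec q g2 -> qform f w != 0 ->
  disjoint_from_QQ g1 g2 finf f0.
Proof.
move=> tau_notFq finf_Fq f0_Fq f_split bb_line g1_Fq g2_Fq w_off.
have on_QQ a b : qform finf (a *: g1 + b *: g2) = 0 ->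
    qform f0 (a *: g1 + b *: g2) = 0 -> a + b * tau = 0.
  move=> Qinf0 Q00; move: (f_split (a *: g1 + b *: g2)).
  rewrite Qinf0 Q00 mulr0 addr0 bb_line qform_scale => /eqP.
  by rewrite mulf_eq0 (negbTE w_off) orbF expf_eq0 /= => /eqP.
move=> _ /[swap] -[a [b ->]] v_nz [Qinf0 Q00].
have ab0 := on_QQ a b Qinf0 Q00.
have abF0 : a ^+ q + b ^+ q * tau = 0.
  by apply: on_QQ; rewrite -frob_lincomb // qform_frob // ?Qinf0 ?Q00 in_Fq0.
have [a0 b0] := tau_independent tau_notFq ab0 abF0.
by move: v_nz; rewrite a0 b0 !scale0r addr0 eqxx.
Qed.

End Frobenius.

Lemma field_of_square_order (q : nat) (E : finFieldType) (tau : E) :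
  #|E| = (q ^ 2)%N -> (#|E|.-1).-primitive_root tau ->
  [/\ (0 < q)%N, (forall x y : E, (x + y) ^+ q = x ^+ q + y ^+ q)
    & tau ^+ q != tau].
Proof.
move=> cardE tau_prim.
have q_gt1 : (1 < q)%N.
  by move: (card_finNzRing_gt1 E); rewrite cardE; case: (q) => [|[|]].
have [p p_pr p_char] := finPcharP E.
have q_pchar : [pchar E].-nat q.
  apply/pnatP => [|r r_pr r_dvd_q]; first lia.
  have : (r %| #|E|)%N by rewrite cardE expnS dvdn_mulr.
  rewrite (card_pprimeChar p_char) Euclid_dvdX // => /andP [r_dvd_p _].
  by move: r_dvd_p; rewrite dvdn_prime2 // => /eqP ->.
split; [lia | by move=> x y; apply: exprDn_pchar |].
apply/negP => /eqP tau_fixed.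
have tau_nz : tau != 0.
  apply/eqP => tau0; move: (prim_expr_order tau_prim).
  have order_nz : ((q ^ 2).-1 == 0)%N = false by apply/negbTE; nia.
  by rewrite tau0 cardE expr0n order_nz => /eqP; rewrite eq_sym oner_eq0.
have tau_pow : tau ^+ q.-1 = 1.
  by apply: (mulIf tau_nz); rewrite mul1r -exprSr prednK ?tau_fixed //; lia.
have := prim_order_dvd tau_prim q.-1; rewrite tau_pow eqxx cardE.
by move=> /dvdn_leq le_ord; have := le_ord ltac:(lia); nia.
Qed.

Lemma vec5_lincomb (R : pzRingType) (a b : R) x0 x1 x2 x3 x4 y0 y1 y2 y3 y4 :
  a *: vec5 x0 x1 x2 x3 x4 + b *: vec5 y0 y1 y2 y3 y4 =
  vec5 (a * x0 + b * y0) (a * x1 + b * y1) (a * x2 + b * y2)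
       (a * x3 + b * y3) (a * x4 + b * y4).
Proof.
apply/rowP => k; rewrite !mxE.
by case: k => [[|[|[|[|[|k]]]]] hk] //=; rewrite !mulr0 addr0.
Qed.

Lemma bb_sub_vec5 (R : pzRingType) (tau : R) x0 x1 x2 x3 x4 :
  bb_sub tau (vec5 x0 x1 x2 x3 x4) = vec3 (x0 + x1 * tau) (x2 + x3 * tau) x4.
Proof. by rewrite /bb_sub !mxE /= !inordK. Qed.

Lemma vec3_scale (R : pzRingType) (s x y z : R) :
  s *: vec3 x y z = vec3 (s * x) (s * y) (s * z).
Proof.
by apply/rowP => k; rewrite !mxE; case: k => [[|[|[|k]]] hk] //=; rewrite mulr0.
Qed.

Lemma vec5_Fq (E : fieldType) (q : nat) (x0 x1 x2 x3 x4 : E) :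
  (0 < q)%N -> in_Fq q x0 -> in_Fq q x1 -> in_Fq q x2 -> in_Fq q x3 ->
  in_Fq q x4 -> Fq_vec q (vec5 x0 x1 x2 x3 x4).
Proof.
move=> q_gt0 *; move=> k; rewrite mxE.
by case: k => [[|[|[|[|[|k]]]]] hk] //=; rewrite nth_nil in_Fq0.
Qed.

(* Bruck-Bose image of the spread line of (d0 + d1 tau, 1, 0): the relation
   tau^2 = t1 tau + t0 makes the combination collapse onto one point. *)
Lemma bb_spread_line (R : comPzRingType) (tau t0 t1 d0 d1 a b : R) :
  tau ^+ 2 = t1 * tau + t0 ->
  bb_sub tau (a *: spread_gen1 d0 d1 + b *: spread_gen2 t0 t1 d0 d1) =
  (a + b * tau) *: vec3 (d0 + d1 * tau) 1 0.
Proof.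
move=> tau_sq; rewrite vec5_lincomb bb_sub_vec5 vec3_scale.
have -> : t0 = tau ^+ 2 - t1 * tau by rewrite tau_sq; ring.
congr vec3; ring.
Qed.

Lemma bb_spread_inf (R : comPzRingType) (tau a b : R) :
  bb_sub tau (a *: spread_inf1 R + b *: spread_inf2 R) =
  (a + b * tau) *: vec3 1 0 0.
Proof. by rewrite vec5_lincomb bb_sub_vec5 vec3_scale; congr vec3; ring. Qed.

Theorem corollary4p4 (q : nat) (E : finFieldType) (tau t0 t1 : E)
  (f : 'I_3 -> 'I_3 -> E) (finf f0 : 'I_5 -> 'I_5 -> E) :
  #|E| = (q ^ 2)%N ->
  (#|E|.-1).-primitive_root tau ->
  in_Fq q t0 -> in_Fq q t1 -> tau ^+ 2 = t1 * tau + t0 ->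
  nonsingular_qform f ->
  Fq_coeffs q finf -> Fq_coeffs q f0 ->
  (forall x : 'rV[E]_5, qform f (bb_sub tau x) = qform finf x + tau * qform f0 x) ->
  (forall d0 d1 : E, in_Fq q d0 -> in_Fq q d1 ->
     qform f (vec3 (d0 + d1 * tau) 1 0) != 0 ->
     disjoint_from_QQ (spread_gen1 d0 d1) (spread_gen2 t0 t1 d0 d1) finf f0)
  /\
  (qform f (vec3 1 0 0) != 0 ->
     disjoint_from_QQ (spread_inf1 E) (spread_inf2 E) finf f0).
Proof.
move=> cardE tau_prim t0_Fq t1_Fq tau_sq _ finf_Fq f0_Fq f_split.
have [q_gt0 frobD tau_notFq] := field_of_square_order cardE tau_prim.
have Fq0 : in_Fq q (0 : E) := in_Fq0 E q_gt0.
have Fq1 : in_Fq q (1 : E) := in_Fq1 E q.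
have disjoint := line_disjoint_from_QQ (f := f) q_gt0 frobD tau_notFq finf_Fq f0_Fq f_split.
split.
- move=> d0 d1 d0_Fq d1_Fq; apply: disjoint.
  + by move=> a b; apply: bb_spread_line.
  + exact: vec5_Fq.
  + apply: vec5_Fq; [exact: q_gt0 | exact: in_FqM | | exact: Fq0 | exact: Fq1 | exact: Fq0].
    by apply: (in_FqD frobD d0_Fq); apply: in_FqM.
- by apply: disjoint; [exact: bb_spread_inf | exact: vec5_Fq ..].
Qed.
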